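(* Fix $\xi\in[0,0.13]$ and let $y_i\in[\cos(2\pi/9),1)$ for all $i\in\{2,3,5,6\}$. Then for any $j\in\{2,3,5,6\}$ with $y_j\ge\max\{y_{j'},\cos(2\pi/10)\}$, one has $\frac{\partial\psi_\xi}{\partial y_j}(\delta,y_2,y_3,y_5,y_6)\ge0$ for all $\delta\in[0,0.13]$.
   Context: Pairing: $2'=6$, $3'=5$, $5'=3$, $6'=2$. For $\xi\ge0$, $y\in(0,1)$: $\eta_\xi(y)=\frac{-2-5y+(1+\xi)^2+\sqrt{(2+5y-(1+\xi)^2)^2+4(2+y)(1-y)(1+\xi)^2}}{2+y}$ (the positive root of $(2+y)\delta^2+2(2+5y-(1+\xi)^2)\delta-4(1-y)(1+\xi)^2$). Let $b(y)=\frac{16}{y+1}-7$, $c_n=\cos(2\pi/n)$, $\beta(y)=b(y)$ on $[c_{10},1]$ and $\beta(y)=\frac{(2-b(c_{10}))b(y)-(2-b(c_9))b(c_{10})}{b(c_9)-b(c_{10})}$ on $[c_9,c_{10}]$. Define $$G(\delta,\eta_2,\eta_3,\eta_5,\eta_6,\beta_2,\beta_3,\beta_5,\beta_6)=\frac{1+\dfrac{\delta[(1+\eta_2)(1+\eta_5)+(1+\eta_3)(1+\eta_6)]-2\delta(\delta+2)}{(2+\eta_2+\eta_6)(2+\eta_3+\eta_5)}}{\sqrt{1+\dfrac{\delta^2+2(1+\beta_2\beta_6)\delta}{(2+\eta_2+\eta_6)^2}}\sqrt{1+\dfrac{\delta^2+2(1+\beta_3\beta_5)\delta}{(2+\eta_3+\eta_5)^2}}}$$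 and $\psi_\xi(\delta,y_2,y_3,y_5,y_6)=G(\delta,\eta_\xi(y_2),\eta_\xi(y_3),\eta_\xi(y_5),\eta_\xi(y_6),\beta(y_2),\beta(y_3),\beta(y_5),\beta(y_6))$. *)

From Stdlib Require Import Reals.
From Coquelicot Require Import Coquelicot.
Open Scope R_scope.

Inductive idx : Type := I2 | I3 | I5 | I6.

Definition pair_idx (i : idx) : idx :=
  match i with I2 => I6 | I3 => I5 | I5 => I3 | I6 => I2 end.

Definition eta (xi y : R) : R :=
  (-2 - 5 * y + (1 + xi) ^ 2
   + sqrt ((2 + 5 * y - (1 + xi) ^ 2) ^ 2 + 4 * (2 + y) * (1 - y) * (1 + xi) ^ 2))
  / (2 + y).

Definition b (y : R) : R := 16 / (y + 1) - 7.

Definition c (n : nat) : R := cos (2 * PI / INR n).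

(* beta(y) = b(y) on [c10,1], the affine-in-b interpolation on [c9,c10]
   (the two formulas agree at y = c10). *)
Definition beta (y : R) : R :=
  if Rle_dec (c 10) y then b y
  else ((2 - b (c 10)) * b y - (2 - b (c 9)) * b (c 10)) / (b (c 9) - b (c 10)).

Definition G (delta eta2 eta3 eta5 eta6 beta2 beta3 beta5 beta6 : R) : R :=
  (1 + (delta * ((1 + eta2) * (1 + eta5) + (1 + eta3) * (1 + eta6))
        - 2 * delta * (delta + 2))
       / ((2 + eta2 + eta6) * (2 + eta3 + eta5)))
  / (sqrt (1 + (delta ^ 2 + 2 * (1 + beta2 * beta6) * delta) / (2 + eta2 + eta6) ^ 2)
     * sqrt (1 + (delta ^ 2 + 2 * (1 + beta3 * beta5) * delta) / (2 + eta3 + eta5) ^ 2)).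

Definition psi (xi delta y2 y3 y5 y6 : R) : R :=
  G delta (eta xi y2) (eta xi y3) (eta xi y5) (eta xi y6)
        (beta y2) (beta y3) (beta y5) (beta y6).

Definition psi_at (xi delta : R) (y : idx -> R) : R :=
  psi xi delta (y I2) (y I3) (y I5) (y I6).

Definition idx_eqb (i j : idx) : bool :=
  match i, j with
  | I2, I2 | I3, I3 | I5, I5 | I6, I6 => true
  | _, _ => false
  end.

Definition upd (y : idx -> R) (j : idx) (t : R) : idx -> R :=
  fun i => if idx_eqb i j then t else y i.

(* l is the partial derivative of psi_xi in y_j at y, taken within the
   region {y_j >= cos(2pi/10)} (where beta = b):  the limit of the difference
   quotient as t -> y_j, t <> y_j, t >= c10.  For y_j > c10 this is the usual
   two-sided partial derivative; at y_j = c10 it is the right derivative. *)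
Definition is_partial_psi (xi delta : R) (y : idx -> R) (j : idx) (l : R) : Prop :=
  filterlim (fun t => (psi_at xi delta (upd y j t) - psi_at xi delta y) / (t - y j))
            (within (fun t => c 10 <= t) (locally' (y j))) (locally l).

From Stdlib Require Import Reals Lra Psatz.
From Coquelicot Require Import Coquelicot.
Open Scope R_scope.

(* Fix every coordinate but y_j >= cos(2 pi/10), where beta = b.  G is invariant under exchanging its two pairs of
   slots and under reversing its slots, so y_j can be moved to the first slot, where
   it enters only the numerator N and the first radicand X, through eta_xi(y_j) and
   b(y_j).  The derivative of N / (sqrt X * sqrt Y) has the sign of 2 N' X - N X',
   which after clearing positive denominators is a polynomial in the slot values and
   in the derivatives eta' and b'.  It is monotone in the betas, eta' and b', so it
   suffices to check it at the extremes of eta in [0, 0.13], eta' in [-0.66, 0],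
   beta in [1, 2] and b' = -16/(y+1)^2 <= -4. *)

Lemma PI_le : PI <= 3.1421.
Proof.
destruct (PI_2_3_7_ineq 1) as [_ H].
unfold sum_f_R0, tg_alt, PI_2_3_7_tg, Ratan_seq in H. simpl in H. lra.
Qed.

Lemma cos_ge_cos_approx (a a0 lb : R) :
  0 <= a <= a0 -> a0 <= 1 -> lb <= cos_approx a0 3 -> lb <= cos a.
Proof.
intros Ha Ha0 Hlb.
pose proof PI2_1. pose proof PI_RGT_0.
assert (cos a0 <= cos a).
{ destruct (Req_dec a a0) as [->|Hne]; [lra|].
  left. apply cos_decreasing_1; lra. }
destruct (cos_bound a0 1) as [Hc _]; [lra | lra |].
simpl in Hc. lra.
Qed.

Lemma c9_ge : 0.7655 <= c 9.
Proof.
unfold c. replace (INR 9) with 9 by (simpl; ring).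
pose proof PI_le. pose proof PI_RGT_0.
apply (cos_ge_cos_approx _ 0.6983); [lra | lra |].
unfold cos_approx, cos_term, sum_f_R0. simpl. lra.
Qed.

Lemma c10_ge : 0.8 <= c 10.
Proof.
unfold c. replace (INR 10) with 10 by (simpl; ring).
pose proof PI_le. pose proof PI_RGT_0.
apply (cos_ge_cos_approx _ 0.6285); [lra | lra |].
unfold cos_approx, cos_term, sum_f_R0. simpl. lra.
Qed.

Lemma b_bounds y : 7/9 <= y <= 1 -> 1 <= b y <= 2.
Proof.
intros Hy. unfold b.
assert (E : (16 / (y + 1)) * (y + 1) = 16) by (field; lra).
split; nra.
Qed.

Lemma b_decreasing x y : -1 < x -> x < y -> b y < b x.
Proof.
intros Hx Hxy. unfold b, Rdiv.
apply Rplus_lt_compat_r, Rmult_lt_compat_l; [lra|].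
apply Rinv_lt_contravar; nra.
Qed.

Lemma is_derive_b y : -1 < y -> is_derive b y (- 16 / (y + 1) ^ 2).
Proof. intros Hy. unfold b. auto_derive; [lra | field; lra]. Qed.

Lemma b_derive_le y : -1 < y <= 1 -> - 16 / (y + 1) ^ 2 <= -4.
Proof.
intros Hy.
assert (Hpos : 0 < (y + 1) ^ 2) by (apply pow_lt; lra).
apply Rmult_le_reg_r with ((y + 1) ^ 2); [exact Hpos|].
unfold Rdiv. rewrite Rmult_assoc, Rinv_l by lra. nra.
Qed.

Lemma interp_bounds p q z :
  p <= 2 -> p < q -> p <= z <= q ->
  p <= ((2 - p) * z - (2 - q) * p) / (q - p) <= 2.
Proof.
intros Hp Hpq Hz.
replace (((2 - p) * z - (2 - q) * p) / (q - p)) with (p + (2 - p) * ((z - p) / (q - p)))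
  by (field; lra).
assert (0 <= (z - p) / (q - p) <= 1).
{ split; [apply Rdiv_le_0_compat; lra|].
  apply Rmult_le_reg_r with (q - p); [lra|]. field_simplify; lra. }
nra.
Qed.

Lemma beta_eq_b y : c 10 <= y -> beta y = b y.
Proof. intros Hy. unfold beta. destruct (Rle_dec (c 10) y); [reflexivity | contradiction]. Qed.

Lemma beta_bounds y : c 9 <= y < 1 -> 1 <= beta y <= 2.
Proof.
intros Hy. pose proof c9_ge. pose proof c10_ge.
assert (c 10 <= 1) by apply COS_bound.
unfold beta. destruct (Rle_dec (c 10) y) as [|Hlt].
- apply b_bounds. lra.
- assert (Hb10 : 1 <= b (c 10) <= 2) by (apply b_bounds; lra).
  assert (b (c 10) < b y) by (apply b_decreasing; lra).
  assert (b y <= b (c 9)).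
  { destruct (Req_dec (c 9) y) as [->|]; [lra|]. left. apply b_decreasing; lra. }
  pose proof (interp_bounds (b (c 10)) (b (c 9)) (b y)). lra.
Qed.

Definition eta_disc (xi y : R) : R :=
  (2 + 5 * y - (1 + xi) ^ 2) ^ 2 + 4 * (2 + y) * (1 - y) * (1 + xi) ^ 2.

Lemma eta_disc_ge_sqr xi y : -2 < y <= 1 ->
  (2 + 5 * y - (1 + xi) ^ 2) ^ 2 <= eta_disc xi y.
Proof.
intros Hy. unfold eta_disc.
assert (0 <= 4 * (2 + y) * (1 - y) * (1 + xi) ^ 2); [|lra].
apply Rmult_le_pos; [|apply pow2_ge_0]. apply Rmult_le_pos; lra.
Qed.

Lemma eta_mul xi y : -2 < y ->
  eta xi y * (2 + y) = sqrt (eta_disc xi y) - (2 + 5 * y - (1 + xi) ^ 2).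
Proof. intros Hy. unfold eta, eta_disc. field. lra. Qed.

Lemma eta_root xi y : -2 < y <= 1 ->
  (2 + y) * eta xi y ^ 2 + 2 * (2 + 5 * y - (1 + xi) ^ 2) * eta xi y
  = 4 * (1 - y) * (1 + xi) ^ 2.
Proof.
intros Hy.
apply Rmult_eq_reg_l with (2 + y); [|lra].
pose proof (eta_mul xi y ltac:(lra)) as Hm.
pose proof (eta_disc_ge_sqr xi y Hy) as HD.
pose proof (pow2_ge_0 (2 + 5 * y - (1 + xi) ^ 2)).
pose proof (sqrt_sqrt (eta_disc xi y) ltac:(lra)) as Hsq.
set (e := eta xi y) in *. set (r := sqrt (eta_disc xi y)) in *.
set (L := 2 + 5 * y - (1 + xi) ^ 2) in *.
replace ((2 + y) * ((2 + y) * e ^ 2 + 2 * L * e))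
  with ((e * (2 + y)) ^ 2 + 2 * L * (e * (2 + y))) by ring.
rewrite Hm. replace ((r - L) ^ 2 + 2 * L * (r - L)) with (r * r - L ^ 2) by ring.
rewrite Hsq. unfold eta_disc, L. ring.
Qed.

Lemma eta_nonneg xi y : -2 < y <= 1 -> 0 <= eta xi y.
Proof.
intros Hy.
apply Rmult_le_reg_r with (2 + y); [lra|]. rewrite Rmult_0_l, eta_mul by lra.
set (L := 2 + 5 * y - (1 + xi) ^ 2).
assert (L <= sqrt (eta_disc xi y)); [|lra].
apply Rle_trans with (Rabs L); [apply Rle_abs|].
rewrite <- sqrt_Rsqr_abs. apply sqrt_le_1_alt.
pose proof (eta_disc_ge_sqr xi y Hy) as HD. fold L in HD. unfold Rsqr. lra.
Qed.

Lemma eta_le xi y : 0 <= xi <= 0.13 -> 0.765 <= y <= 1 -> eta xi y <= 0.13.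
Proof.
intros Hxi Hy.
pose proof (eta_root xi y ltac:(lra)) as Hroot. pose proof (eta_nonneg xi y ltac:(lra)).
assert (Hs : 1 <= (1 + xi) ^ 2 <= 1.2769) by nra.
set (e := eta xi y) in *. set (s := (1 + xi) ^ 2) in *.
apply Rnot_lt_le. intros He. nra.
Qed.

(* Implicit differentiation of the quadratic of [eta_root], whose derivative in
   eta is 2 (2 + y) eta + 2 (2 + 5 y - (1 + xi)^2) = 2 sqrt (eta_disc xi y). *)
Lemma is_derive_eta xi y : -2 < y -> 0 < eta_disc xi y ->
  is_derive (eta xi) y
    (- (eta xi y ^ 2 + 10 * eta xi y + 4 * (1 + xi) ^ 2) / (2 * sqrt (eta_disc xi y))).
Proof.
intros Hy HD.
assert (Hr : 0 < sqrt (eta_disc xi y)) by (apply sqrt_lt_R0; exact HD).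
unfold eta. auto_derive.
- repeat split; try exact HD; lra.
- pose proof (sqrt_sqrt _ (Rlt_le _ _ HD)) as Hsq.
  set (r := sqrt (eta_disc xi y)) in *.
  repeat match goal with |- context [sqrt ?a] =>
    replace (sqrt a) with r by (unfold r, eta_disc; f_equal; ring) end.
  unfold eta_disc in Hsq.
  field_simplify; [| lra | lra].
  replace (r ^ 2) with (r * r) by ring. rewrite Hsq. field.
  assert (0 < r * (2 + y) ^ 2) by (apply Rmult_lt_0_compat; [lra | apply pow_lt; lra]).
  lra.
Qed.

Lemma eta_bounds xi y : 0 <= xi <= 0.13 -> 0.765 <= y <= 1 -> 0 <= eta xi y <= 0.13.
Proof. intros Hxi Hy. split; [apply eta_nonneg; lra | apply eta_le; assumption]. Qed.

Lemma eta_derive_bounds xi y : 0 <= xi <= 0.13 -> 0.765 <= y <= 1 ->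
  exists e', is_derive (eta xi) y e' /\ -0.66 <= e' <= 0.
Proof.
intros Hxi Hy.
assert (Hs : 1 <= (1 + xi) ^ 2 <= 1.2769) by nra.
assert (HL : 0 < 2 + 5 * y - (1 + xi) ^ 2) by lra.
assert (HD : 0 < eta_disc xi y).
{ pose proof (eta_disc_ge_sqr xi y ltac:(lra)). nra. }
eexists; split; [apply is_derive_eta; [lra | exact HD]|].
pose proof (eta_bounds xi y Hxi Hy) as He.
pose proof (eta_mul xi y ltac:(lra)) as Hm.
set (e := eta xi y) in *. set (r := sqrt (eta_disc xi y)) in *.
assert (Hr : 0 < r) by (apply sqrt_lt_R0; exact HD).
split.
- apply Rmult_le_reg_r with (2 * r); [lra|].
  unfold Rdiv. rewrite Rmult_assoc, Rinv_l by lra. nra.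
- apply Rlt_le, Rdiv_neg_pos; nra.
Qed.

Definition G_pairs (d A B P c1 c2 : R) : R :=
  (1 + (d * P - 2 * d * (d + 2)) / (A * B))
  / (sqrt (1 + (d ^ 2 + 2 * (1 + c1) * d) / A ^ 2)
     * sqrt (1 + (d ^ 2 + 2 * (1 + c2) * d) / B ^ 2)).

Lemma G_eq_G_pairs d a2 a3 a5 a6 p2 p3 p5 p6 :
  G d a2 a3 a5 a6 p2 p3 p5 p6
  = G_pairs d (2 + a2 + a6) (2 + a3 + a5)
      ((1 + a2) * (1 + a5) + (1 + a3) * (1 + a6)) (p2 * p6) (p3 * p5).
Proof. reflexivity. Qed.

Lemma G_pairs_swap d A B P c1 c2 : G_pairs d A B P c1 c2 = G_pairs d B A P c2 c1.
Proof. unfold G_pairs. rewrite (Rmult_comm A B), (Rmult_comm (sqrt _)). reflexivity. Qed.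

Lemma G_swap_pairs d a2 a3 a5 a6 p2 p3 p5 p6 :
  G d a2 a3 a5 a6 p2 p3 p5 p6 = G d a3 a2 a6 a5 p3 p2 p6 p5.
Proof. rewrite !G_eq_G_pairs, G_pairs_swap. f_equal; ring. Qed.

Lemma G_reverse d a2 a3 a5 a6 p2 p3 p5 p6 :
  G d a2 a3 a5 a6 p2 p3 p5 p6 = G d a6 a5 a3 a2 p6 p5 p3 p2.
Proof. rewrite !G_eq_G_pairs. f_equal; ring. Qed.

Lemma is_derive_div_sqrt_nonneg (N X : R -> R) x N' X' s :
  is_derive N x N' -> is_derive X x X' -> 0 < X x -> 0 < s ->
  0 <= 2 * N' * X x - N x * X' ->
  exists l, is_derive (fun t => N t / (sqrt (X t) * s)) x l /\ 0 <= l.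
Proof.
intros HN HX HXpos Hs Hsign.
assert (Hsq : 0 < sqrt (X x)) by (apply sqrt_lt_R0; exact HXpos).
exists ((2 * N' * X x - N x * X') / (2 * X x * sqrt (X x) * s)). split.
- assert (ex_derive N x) by (exists N'; exact HN).
  assert (ex_derive X x) by (exists X'; exact HX).
  auto_derive.
  + repeat split; try assumption. apply Rgt_not_eq, Rmult_lt_0_compat; lra.
  + replace (Derive (fun t => N t) x) with N' by (symmetry; exact (is_derive_unique _ _ _ HN)).
    replace (Derive (fun t => X t) x) with X' by (symmetry; exact (is_derive_unique _ _ _ HX)).
    pose proof (sqrt_sqrt _ (Rlt_le _ _ HXpos)) as Hsq2.
    set (r := sqrt (X x)) in *. rewrite <- Hsq2. field. lra.
- apply Rdiv_le_0_compat; [exact Hsign|].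
  repeat apply Rmult_lt_0_compat; lra.
Qed.

Lemma is_derive_G_numer (e : R -> R) x e' d e3 e5 e6 :
  is_derive e x e' -> 2 + e x + e6 <> 0 -> 2 + e3 + e5 <> 0 ->
  is_derive
    (fun t => 1 + (d * ((1 + e t) * (1 + e5) + (1 + e3) * (1 + e6)) - 2 * d * (d + 2))
                  / ((2 + e t + e6) * (2 + e3 + e5))) x
    (d * e' * ((1 + e6) * (e5 - e3) + 2 * d + 4) / ((2 + e x + e6) ^ 2 * (2 + e3 + e5))).
Proof.
intros He HA HB.
assert (ex_derive e x) by (exists e'; exact He).
auto_derive.
- repeat split; try assumption. apply Rmult_integral_contrapositive; split; assumption.
- replace (Derive (fun t => e t) x) with e' by (symmetry; exact (is_derive_unique _ _ _ He)).
  field. split; assumption.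
Qed.

Lemma is_derive_G_radicand (e b1 : R -> R) x e' b1' d e6 b6 :
  is_derive e x e' -> is_derive b1 x b1' -> 2 + e x + e6 <> 0 ->
  is_derive (fun t => 1 + (d ^ 2 + 2 * (1 + b1 t * b6) * d) / (2 + e t + e6) ^ 2) x
    ((2 * d * b6 * b1' * (2 + e x + e6) - 2 * (d ^ 2 + 2 * (1 + b1 x * b6) * d) * e')
     / (2 + e x + e6) ^ 3).
Proof.
intros He Hb HA.
assert (ex_derive e x) by (exists e'; exact He).
assert (ex_derive b1 x) by (exists b1'; exact Hb).
auto_derive.
- repeat split; try assumption.
  rewrite Rmult_1_r. apply Rmult_integral_contrapositive_currified; exact HA.
- replace (Derive (fun t => e t) x) with e' by (symmetry; exact (is_derive_unique _ _ _ He)).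
  replace (Derive (fun t => b1 t) x) with b1' by (symmetry; exact (is_derive_unique _ _ _ Hb)).
  field. exact HA.
Qed.

Lemma slope_poly_worst_case A s d :
  2 <= A <= 2.26 -> 0 <= s <= 0.26 -> 0 <= d <= 0.13 ->
  0.66 * (4 + 2 * d + 1.13 * s) * (A ^ 2 + d ^ 2 + 6 * d)
  <= (A * (2 + s) + d * (A - 4 + s - 2 * d)) * (4 * A - 0.66 * (d + 6)).
Proof.
intros HA Hs Hd.
assert (0 <= (A - 2) * s) by nra. assert (0 <= (A - 2) * d) by nra.
assert (0 <= s * d) by nra. assert (0 <= d * d <= 0.13 * d) by nra.
nra.
Qed.

(* The right side minus the left decreases in b2 and u and increases in v and b6,
   so the worst case is b2 = 2, b6 = 1, u = 0.66, v = 4: [slope_poly_worst_case]. *)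
Lemma slope_poly_nonneg d e2 e3 e5 e6 b2 b6 u v :
  0 <= d <= 0.13 -> 0 <= e2 <= 0.13 -> 0 <= e3 <= 0.13 -> 0 <= e5 <= 0.13 ->
  0 <= e6 <= 0.13 -> 1 <= b2 <= 2 -> 1 <= b6 <= 2 -> 0 <= u <= 0.66 -> 4 <= v ->
  u * ((1 + e6) * (e5 - e3) + 2 * d + 4)
    * ((2 + e2 + e6) ^ 2 + (d ^ 2 + 2 * (1 + b2 * b6) * d))
  <= ((2 + e2 + e6) * (2 + e3 + e5)
      + d * ((1 + e2) * (1 + e5) + (1 + e3) * (1 + e6)) - 2 * d * (d + 2))
     * (b6 * v * (2 + e2 + e6) - (d + 2 + 2 * b2 * b6) * u).
Proof.
intros Hd H2 H3 H5 H6 Hb2 Hb6 Hu Hv.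
set (A := 2 + e2 + e6). set (s := e3 + e5).
set (NAB := A * (2 + e3 + e5) + _ - _).
set (K := (1 + e6) * (e5 - e3) + 2 * d + 4).
assert (HA : 2 <= A <= 2.26) by (unfold A; lra).
assert (Hs : 0 <= s <= 0.26) by (unfold s; lra).
assert (NAB_ge : A * (2 + s) + d * (A - 4 + s - 2 * d) <= NAB).
{ assert (0 <= d * (e2 * e5 + e3 * e6)) by (apply Rmult_le_pos; nra).
  unfold NAB, A, s. nra. }
assert (NAB_ge_3_7 : 3.7 <= NAB) by nra.
assert (K_bounds : 0 <= K <= 4 + 2 * d + 1.13 * s) by (unfold K, s; nra).
assert (worst_b2_v :
  NAB * (4 * b6 * A - (d + 2 + 4 * b6) * u) - u * K * (A ^ 2 + d ^ 2 + 2 * d + 4 * b6 * d)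
  <= NAB * (b6 * v * A - (d + 2 + 2 * b2 * b6) * u)
     - u * K * (A ^ 2 + (d ^ 2 + 2 * (1 + b2 * b6) * d))).
{ assert (0 <= NAB * (b6 * A * (v - 4) + 2 * b6 * u * (2 - b2))).
  { apply Rmult_le_pos; [lra|].
    assert (0 <= b6 * A * (v - 4)) by (apply Rmult_le_pos; nra).
    assert (0 <= 2 * b6 * u * (2 - b2)) by (repeat apply Rmult_le_pos; lra). lra. }
  assert (0 <= u * K * (2 * b6 * d * (2 - b2))) by (repeat apply Rmult_le_pos; lra).
  match goal with |- ?L <= ?R =>
    replace R with (L + NAB * (b6 * A * (v - 4) + 2 * b6 * u * (2 - b2))
                      + u * K * (2 * b6 * d * (2 - b2))) by ring end.
  lra. }
assert (worst_b6 :
  NAB * (4 * A - (d + 6) * u) - u * K * (A ^ 2 + d ^ 2 + 6 * d)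
  <= NAB * (4 * b6 * A - (d + 2 + 4 * b6) * u) - u * K * (A ^ 2 + d ^ 2 + 2 * d + 4 * b6 * d)).
{ assert (0 <= (b6 - 1) * (4 * NAB * (A - u) - 4 * u * K * d)); [|nra].
  apply Rmult_le_pos; [lra|].
  assert (u * K <= 0.66 * 4.6) by (apply Rmult_le_compat; lra).
  assert (u * K * d <= 0.66 * 4.6 * 0.13)
    by (apply Rmult_le_compat; [apply Rmult_le_pos | | |]; lra).
  assert (3.7 * 1.34 <= NAB * (A - u)) by (apply Rmult_le_compat; lra).
  lra. }
assert (worst_u :
  NAB * (4 * A - (d + 6) * 0.66) - 0.66 * K * (A ^ 2 + d ^ 2 + 6 * d)
  <= NAB * (4 * A - (d + 6) * u) - u * K * (A ^ 2 + d ^ 2 + 6 * d)).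
{ assert (0 <= (0.66 - u) * (NAB * (d + 6) + K * (A ^ 2 + d ^ 2 + 6 * d))); [|nra].
  apply Rmult_le_pos; [lra | nra]. }
pose proof (slope_poly_worst_case A s d HA Hs Hd).
assert (0.66 * K * (A ^ 2 + d ^ 2 + 6 * d)
        <= 0.66 * (4 + 2 * d + 1.13 * s) * (A ^ 2 + d ^ 2 + 6 * d))
  by (apply Rmult_le_compat_r; [nra | lra]).
assert ((A * (2 + s) + d * (A - 4 + s - 2 * d)) * (4 * A - 0.66 * (d + 6))
        <= NAB * (4 * A - (d + 6) * 0.66)).
{ rewrite (Rmult_comm (d + 6)). apply Rmult_le_compat_r; lra. }
lra.
Qed.

(* The sign condition of [is_derive_div_sqrt_nonneg] for the first slot of G. *)
Lemma G_first_slot_slope_nonneg d e2 e3 e5 e6 b2 b6 e' b' :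
  0 <= d <= 0.13 -> 0 <= e2 <= 0.13 -> 0 <= e3 <= 0.13 -> 0 <= e5 <= 0.13 ->
  0 <= e6 <= 0.13 -> 1 <= b2 <= 2 -> 1 <= b6 <= 2 -> -0.66 <= e' <= 0 -> b' <= -4 ->
  0 <= 2 * (d * e' * ((1 + e6) * (e5 - e3) + 2 * d + 4) / ((2 + e2 + e6) ^ 2 * (2 + e3 + e5)))
         * (1 + (d ^ 2 + 2 * (1 + b2 * b6) * d) / (2 + e2 + e6) ^ 2)
       - (1 + (d * ((1 + e2) * (1 + e5) + (1 + e3) * (1 + e6)) - 2 * d * (d + 2))
              / ((2 + e2 + e6) * (2 + e3 + e5)))
         * ((2 * d * b6 * b' * (2 + e2 + e6) - 2 * (d ^ 2 + 2 * (1 + b2 * b6) * d) * e')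
            / (2 + e2 + e6) ^ 3).
Proof.
intros Hd H2 H3 H5 H6 Hb2 Hb6 He' Hb'.
pose proof (slope_poly_nonneg d e2 e3 e5 e6 b2 b6 (- e') (- b')
              Hd H2 H3 H5 H6 Hb2 Hb6 ltac:(lra) ltac:(lra)) as Hpoly.
assert (HA : 0 < 2 + e2 + e6) by lra. assert (HB : 0 < 2 + e3 + e5) by lra.
match goal with |- 0 <= ?E =>
  replace E with (2 * d / ((2 + e2 + e6) ^ 4 * (2 + e3 + e5))
    * (((2 + e2 + e6) * (2 + e3 + e5)
        + d * ((1 + e2) * (1 + e5) + (1 + e3) * (1 + e6)) - 2 * d * (d + 2))
       * (b6 * - b' * (2 + e2 + e6) - (d + 2 + 2 * b2 * b6) * - e')
       - - e' * ((1 + e6) * (e5 - e3) + 2 * d + 4)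
         * ((2 + e2 + e6) ^ 2 + (d ^ 2 + 2 * (1 + b2 * b6) * d))))
    by (field; lra) end.
apply Rmult_le_pos; [|lra].
apply Rdiv_le_0_compat; [lra|].
apply Rmult_lt_0_compat; [apply pow_lt|]; lra.
Qed.

Lemma G_first_slot_derive_nonneg (e b1 : R -> R) x e' b1' d e3 e5 e6 b3 b5 b6 :
  is_derive e x e' -> is_derive b1 x b1' ->
  0 <= d <= 0.13 -> 0 <= e x <= 0.13 -> 0 <= e3 <= 0.13 -> 0 <= e5 <= 0.13 ->
  0 <= e6 <= 0.13 -> 1 <= b1 x <= 2 -> 1 <= b6 <= 2 -> 0 <= b3 * b5 ->
  -0.66 <= e' <= 0 -> b1' <= -4 ->
  exists l, is_derive (fun t => G d (e t) e3 e5 e6 (b1 t) b3 b5 b6) x l /\ 0 <= l.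
Proof.
intros He Hb Hd H2 H3 H5 H6 Hb2 Hb6 Hb35 He' Hb'.
assert (Hrad : forall c1 A, 0 <= c1 -> 0 < A -> 1 <= 1 + (d ^ 2 + 2 * (1 + c1) * d) / A ^ 2).
{ intros c1 A Hc1 HA.
  assert (0 <= (d ^ 2 + 2 * (1 + c1) * d) / A ^ 2); [|lra].
  apply Rdiv_le_0_compat; [nra | apply pow_lt; lra]. }
unfold G. eapply is_derive_div_sqrt_nonneg.
- apply is_derive_G_numer; [exact He | lra | lra].
- apply is_derive_G_radicand; [exact He | exact Hb | lra].
- pose proof (Hrad (b1 x * b6) (2 + e x + e6) ltac:(nra) ltac:(lra)). lra.
- apply sqrt_lt_R0. pose proof (Hrad (b3 * b5) (2 + e3 + e5) Hb35 ltac:(lra)). lra.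
- apply G_first_slot_slope_nonneg; assumption.
Qed.

Lemma is_derive_difference_quotient (F : R -> R) x l :
  is_derive F x l -> filterlim (fun t => (F t - F x) / (t - x)) (locally' x) (locally l).
Proof.
intros HF. apply is_derive_Reals in HF.
intros P [eps HP].
destruct (HF eps (cond_pos eps)) as [del Hdel].
exists del. intros t Ht Hne. apply HP.
change (Rabs ((F t - F x) / (t - x) - l) < eps).
replace t with (x + (t - x)) at 1 by ring.
apply Hdel; [intro H0; apply Hne; lra | exact Ht].
Qed.

Lemma psi_at_upd_same xi d y j : psi_at xi d (upd y j (y j)) = psi_at xi d y.
Proof. destruct j; reflexivity. Qed.

Lemma is_partial_psi_of_derive xi d y j (F : R -> R) l :
  is_derive F (y j) l -> (forall t, c 10 <= t -> psi_at xi d (upd y j t) = F t) ->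
  c 10 <= y j -> is_partial_psi xi d y j l.
Proof.
intros HF HE Hy. unfold is_partial_psi.
rewrite <- (psi_at_upd_same xi d y j), (HE (y j) Hy).
apply filterlim_within_ext with (f := fun t => (F t - F (y j)) / (t - y j)).
{ intros t Ht. rewrite HE by exact Ht. reflexivity. }
eapply filterlim_filter_le_1; [apply filter_le_within |].
apply is_derive_difference_quotient, HF.
Qed.

Lemma psi_at_upd_first_slot xi d y j :
  exists k3 k5 k6, forall t, c 10 <= t ->
    psi_at xi d (upd y j t)
    = G d (eta xi t) (eta xi (y k3)) (eta xi (y k5)) (eta xi (y k6))
          (b t) (beta (y k3)) (beta (y k5)) (beta (y k6)).
Proof.
destruct j; [exists I3, I5, I6 | exists I2, I6, I5 | exists I6, I2, I3 | exists I5, I3, I2];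
  intros t Ht; cbv [psi_at psi upd idx_eqb]; rewrite (beta_eq_b t Ht).
- reflexivity.
- apply G_swap_pairs.
- rewrite G_swap_pairs. apply G_reverse.
- apply G_reverse.
Qed.

Theorem lemma4p3 :
  forall (xi : R), 0 <= xi <= 13/100 ->
  forall (y : idx -> R), (forall i, c 9 <= y i < 1) ->
  forall (j : idx), y j >= Rmax (y (pair_idx j)) (c 10) ->
  forall (delta : R), 0 <= delta <= 13/100 ->
  exists l : R, is_partial_psi xi delta y j l /\ 0 <= l.
Proof.
intros xi Hxi y Hy j Hj d Hd.
pose proof c9_ge as Hc9. pose proof c10_ge as Hc10.
assert (Hyj : c 10 <= y j) by (pose proof (Rmax_r (y (pair_idx j)) (c 10)); lra).
assert (Hyj1 : y j < 1) by apply Hy.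
assert (Heta : forall i, 0 <= eta xi (y i) <= 0.13).
{ intros i. specialize (Hy i). apply eta_bounds; lra. }
assert (Hbeta : forall i, 1 <= beta (y i) <= 2) by (intros i; apply beta_bounds, Hy).
destruct (eta_derive_bounds xi (y j)) as (e' & He & He'); [lra | lra |].
destruct (psi_at_upd_first_slot xi d y j) as (k3 & k5 & k6 & Hpsi).
destruct (G_first_slot_derive_nonneg (eta xi) b (y j) e' (- 16 / (y j + 1) ^ 2) d
            (eta xi (y k3)) (eta xi (y k5)) (eta xi (y k6))
            (beta (y k3)) (beta (y k5)) (beta (y k6)))
  as (l & Hl & Hl0); try exact He; try apply Heta; try apply Hbeta; try lra.
- apply is_derive_b. lra.
- apply b_bounds. lra.
- pose proof (Hbeta k3). pose proof (Hbeta k5). nra.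
- apply b_derive_le. lra.
- exists l. split; [exact (is_partial_psi_of_derive xi d y j _ l Hl Hpsi Hyj) | exact Hl0].
Qed.
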